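(* Let $H=(V,E)$ be a hypergraph such that the digraph $\mathcal D_3(H)$ has a spanning subdigraph that is a vertex-disjoint union of non-trivial arborescences. Then $H$ is quasi-eulerian.
   Context: A hypergraph $H=(V,E)$ consists of a finite nonempty vertex set $V$, a finite edge set $E$ disjoint from $V$, and an incidence function assigning to each edge $e\in E$ a subset of $V$ (also denoted $e$); distinct edges may have the same vertex set. Hypergraphs are assumed to have no empty edges. A walk is a sequence $W=v_0e_1v_1e_2\cdots e_kv_k$ with $v_i\in V$, $e_i\in E$, such that for each $i$, $v_{i-1}\ne v_i$ and $v_{i-1},v_i\in e_i$; the $v_i$ are its anchors. $W$ is closed if $k\ge 2$ and $v_0=v_k$; it is a strict trail if $e_1,\dots,e_k$ are pairwise distinct. An Euler family of $H$ is a family of closed strict trails such that every edge of $H$ lies in exactly one trail and no two trails have a common anchor; $H$ is quasi-eulerian if it has one. $\mathcal D_3(H)$ is the digraph with vertex set $E$ and arc set $\{(e,f): e,f\in E,\ |f\setminus e|=1,\ |e\cap f|\ge 3\}$. An arborescence is a digraph whose underlying undirected graph is a tree and whose arcs are all directed towards a root; it is non-trivial if it has at least two vertices. *)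

From mathcomp Require Import all_boot.
Set Implicit Arguments. Unset Strict Implicit. Unset Printing Implicit Defensive.

Section Hypergraph.
Variables (V E : finType) (inc : E -> {set V}).

(* A walk v0 e1 v1 ... ek vk is encoded as (v0, [:: (e1,v1); ...; (ek,vk)]). *)
Fixpoint is_walk_from (v : V) (s : seq (E * V)) : bool :=
  match s with
  | [::] => true
  | (e, w) :: s' => [&& v != w, v \in inc e, w \in inc e & is_walk_from w s']
  end.

Definition is_walk (W : V * seq (E * V)) : bool := is_walk_from W.1 W.2.

Definition anchors (W : V * seq (E * V)) : seq V := W.1 :: map snd W.2.

Definition wedges (W : V * seq (E * V)) : seq E := map fst W.2.

Definition closed_strict_trail (W : V * seq (E * V)) : bool :=
  [&& is_walk W, 2 <= size W.2, last W.1 (map snd W.2) == W.1 & uniq (wedges W)].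

Definition euler_family (F : seq (V * seq (E * V))) : Prop :=
  [/\ all closed_strict_trail F,
      forall e : E, count (fun W => e \in wedges W) F = 1 &
      forall i j, i < size F -> j < size F -> i != j ->
        forall W0 : V * seq (E * V),
        [disjoint anchors (nth W0 F i) & anchors (nth W0 F j)]].

Definition quasi_eulerian : Prop := exists F, euler_family F.

Definition D3_arc (e f : E) : bool :=
  (#|inc f :\: inc e| == 1) && (3 <= #|inc e :&: inc f|).

End Hypergraph.

(* Arborescence (all arcs directed towards the root) on vertex set B for the
   arc relation a: there is a root r in B with no out-arc, every other vertex
   of B has exactly one out-arc (inside B), and every vertex of B reaches r
   along arcs inside B. *)
Definition is_arborescence (T : finType) (a : rel T) (B : {set T}) : Prop :=
  exists2 r, r \in B &
    [/\ forall y, ~~ a r y,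
        forall x, x \in B -> x != r -> #|[set y in B | a x y]| = 1 &
        forall x, x \in B -> connect (fun u v => [&& a u v, u \in B & v \in B]) x r].

Definition has_spanning_arborescence_forest (T : finType) (D : rel T) : Prop :=
  exists (A : rel T) (P : {set {set T}}),
  [/\ forall x y, A x y -> D x y,
      partition P [set: T],
      forall B, B \in P -> 2 <= #|B| /\ is_arborescence A B &
      forall x y, A x y -> exists2 B, B \in P & (x \in B) && (y \in B)].

From mathcomp Require Import all_boot.
Set Implicit Arguments. Unset Strict Implicit. Unset Printing Implicit Defensive.

(* Every edge is covered by closed strict trails, block by block, starting at
   the root of each arborescence.  The first edge u of a block, with its arc
   (u, r) into the root, gives the trail b -u- c -r- b for two common vertices
   b, c of u and r.  Any other uncovered edge u of a block already met has, on
   its path to the root, an arc (u, v) with v covered, say on ... a -v- b ...;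
   inc u and inc v share a vertex z other than a and b, and since inc v \ inc u
   is a single vertex, inc u contains a or b, so a -v- b can be replaced by
   a -u- z -v- b or a -v- z -u- b.  Finally, edge-disjoint closed trails sharing
   an anchor are spliced into one, which yields an Euler family. *)

Lemma card_gt2_avoid2 (T : finType) (A : {set T}) a b :
  2 < #|A| -> exists z, [/\ z \in A, z != a & z != b].
Proof.
move=> A3; have : 0 < #|A :\: [set a; b]|.
  rewrite cardsD subn_gt0; apply: leq_ltn_trans A3.
  apply: leq_trans (subset_leq_card (subsetIr _ _)) _.
  by rewrite cards2; case: (a != b).
by case/card_gt0P => z; rewrite !inE negb_or => /andP[/andP[za zb] zA]; exists z.
Qed.

Lemma connect_crossing (T : finType) (e : rel T) (S : pred T) x y :
  connect e x y -> ~~ S x -> S y -> exists u v, [/\ e u v, ~~ S u & S v].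
Proof.
case/connectP=> p + ->; elim: p x => [|z p IHp] x /=; first by move=> _ /negP.
case/andP=> exz pz Nx; have [Sz | Nz] := boolP (S z); first by exists x, z.
exact: IHp.
Qed.

Lemma card_setCU_ltn (T : finType) (A B : {set T}) x :
  x \in A -> x \notin B -> #|~: (A :|: B)| < #|~: B|.
Proof.
move=> xA xB; apply/proper_card/properP; rewrite setCS subsetUr.
by split=> //; exists x; rewrite !inE ?xA ?xB.
Qed.

Section ClosedTrails.
Variables (V E : finType) (inc : E -> {set V}).
Notation walk := (V * seq (E * V))%type.
Notation trail := (closed_strict_trail inc).

Lemma is_walk_from_cat v s t : is_walk_from inc v (s ++ t) =
  is_walk_from inc v s && is_walk_from inc (last v (map snd s)) t.
Proof. by elim: s v => [|[e w] s IHs] v //=; rewrite IHs !andbA. Qed.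

Lemma closed_strict_trailP (W : walk) :
  reflect [/\ is_walk_from inc W.1 W.2, 2 <= size W.2,
              last W.1 (map snd W.2) = W.1 & uniq (map fst W.2)]
          (trail W).
Proof. by apply: (iffP and4P) => -[? ? /eqP ? ?]; split. Qed.

Lemma anchors_trail W : trail W -> anchors W =i map snd W.2.
Proof.
case: W => w0 [|[e w] s] /closed_strict_trailP //= [_ _ Hlast _] x.
have w0_in : w0 \in w :: map snd s by rewrite -{1}Hlast mem_last.
by rewrite /anchors /= in_cons; case: eqP => [->|].
Qed.

Definition rot_walk (W : walk) i : walk :=
  (last W.1 (map snd (take i W.2)), rot i W.2).

Lemma trail_rot W i : trail W -> trail (rot_walk W i).
Proof.
case: W => w0 s /closed_strict_trailP /= [Hwalk Hsize Hlast Huniq].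
have Hdrop : last (last w0 (map snd (take i s))) (map snd (drop i s)) = w0.
  by rewrite -last_cat -map_cat cat_take_drop.
apply/closed_strict_trailP; split => /=.
- rewrite /rot is_walk_from_cat Hdrop andbC -is_walk_from_cat.
  by rewrite cat_take_drop.
- by rewrite size_rot.
- by rewrite /rot map_cat last_cat Hdrop.
- by rewrite map_rot rot_uniq.
Qed.

Lemma anchors_rot W i : trail W -> anchors (rot_walk W i) =i anchors W.
Proof.
move=> HW x; rewrite (anchors_trail HW) (anchors_trail (trail_rot i HW)).
by rewrite /= map_rot mem_rot.
Qed.

Lemma rot_walk_start W v : trail W -> v \in anchors W ->
  exists i, (rot_walk W i).1 = v.
Proof.
move=> HW; rewrite (anchors_trail HW) => vW.
exists (index v (map snd W.2)).+1.
by rewrite /= map_take (take_nth v) ?index_mem // last_rcons nth_index.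
Qed.

Lemma trail_splice C W : trail C -> trail W ->
  ~~ [disjoint anchors C & anchors W] -> uniq (wedges C ++ wedges W) ->
  exists X, [/\ trail X, perm_eq (wedges X) (wedges C ++ wedges W) &
                {subset anchors X <= anchors C ++ anchors W}].
Proof.
move=> HC HW; rewrite disjoint_has negbK => /hasP[v vC vW] Huniq.
have [i Hi] := rot_walk_start HC vC; have [j Hj] := rot_walk_start HW vW.
have wedges_rot (Y : walk) k : perm_eq (wedges (rot_walk Y k)) (wedges Y).
  by rewrite /wedges map_rot perm_rot.
move: (trail_rot i HC) (trail_rot j HW) (anchors_rot i HC) (anchors_rot j HW).
move: (wedges_rot C i) (wedges_rot W j).
case: (rot_walk C i) Hi => _ C' /= ->; case: (rot_walk W j) Hj => _ W' /= ->.
move=> pC pW /closed_strict_trailP /= [wC sC lC _].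
move=> /closed_strict_trailP /= [wW _ lW _] aC aW.
have pCW : perm_eq (wedges (v, C' ++ W')) (wedges C ++ wedges W).
  by rewrite /wedges map_cat perm_cat.
exists (v, C' ++ W'); split => //.
- apply/closed_strict_trailP; split => /=.
  + by rewrite is_walk_from_cat wC lC wW.
  + by rewrite size_cat (leq_trans sC) ?leq_addr.
  + by rewrite map_cat last_cat lC lW.
  + by rewrite -/(wedges (v, C' ++ W')) (perm_uniq pCW).
- move=> x; rewrite -cat_cons mem_cat -aC -aW /anchors /= map_cat.
  by rewrite !in_cons mem_cat; case: (x == v).
Qed.

Definition family_edges (F : seq walk) := flatten (map (@wedges V E) F).
Definition family_anchors (F : seq walk) := flatten (map (@anchors V E) F).

Fixpoint anchor_disjoint (F : seq walk) : bool :=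
  if F is W :: G
  then [disjoint anchors W & family_anchors G] && anchor_disjoint G
  else true.

Lemma family_edges_cons W F :
  family_edges (W :: F) = wedges W ++ family_edges F.
Proof. by []. Qed.

Lemma family_anchors_cons W F :
  family_anchors (W :: F) = anchors W ++ family_anchors F.
Proof. by []. Qed.

Lemma trail_merge C F : trail C -> all trail F -> anchor_disjoint F ->
  uniq (wedges C ++ family_edges F) ->
  exists G, [/\ all trail G, anchor_disjoint G,
    perm_eq (family_edges G) (wedges C ++ family_edges F) &
    {subset family_anchors G <= anchors C ++ family_anchors F}].
Proof.
elim: F C => [|W F IHF] C HC.
  move=> _ _ _; exists [:: C]; split => //=; rewrite ?HC //.
  by rewrite disjoint_sym disjoint_has.
case/andP=> HW HF /andP[dW dF].
rewrite family_edges_cons family_anchors_cons => Hu.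
have [dCW | /(trail_splice HC HW)] := boolP [disjoint anchors C & anchors W].
- have [|G [HG dG pG aG]] := IHF C HC HF dF.
    by move: Hu; rewrite uniq_catCA cat_uniq => /and3P[].
  exists (W :: G); split.
  + by rewrite /= HW.
  + rewrite /= dG andbT disjoint_has; apply/hasPn => x xW; apply/negP => /aG.
    by rewrite mem_cat (disjointFl dCW xW) (disjointFr dW xW).
  + by rewrite family_edges_cons perm_sym perm_catCA perm_cat2l perm_sym.
  + move=> x; rewrite family_anchors_cons !mem_cat => /orP[-> | /aG].
      by rewrite orbT.
    by rewrite mem_cat => /orP[] ->; rewrite ?orbT.
- case=> [|X [HX pX aX]]; first by move: Hu; rewrite catA cat_uniq => /andP[].
  have [|G [HG dG pG aG]] := IHF X HX HF dF.
    by rewrite (perm_uniq (perm_cat pX (perm_refl _))) -catA.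
  exists G; split => //; first by rewrite (permPl pG) catA perm_cat2r.
  move=> x /aG; rewrite !mem_cat => /orP[/aX|->]; last by rewrite !orbT.
  by rewrite mem_cat => /orP[] ->; rewrite ?orbT.
Qed.

Lemma anchor_disjoint_trails F : all trail F -> uniq (family_edges F) ->
  exists G, [/\ all trail G, anchor_disjoint G &
                perm_eq (family_edges G) (family_edges F)].
Proof.
elim: F => [|C F IHF]; first by exists [::].
case/andP=> HC HF; rewrite family_edges_cons => Hu.
have [G0 [HG0 dG0 pG0]] : exists G, [/\ all trail G, anchor_disjoint G &
                perm_eq (family_edges G) (family_edges F)].
  by apply: IHF => //; move: Hu; rewrite cat_uniq => /and3P[].
have [|G [HG dG pG _]] := trail_merge HC HG0 dG0.
  by rewrite (perm_uniq (perm_cat (perm_refl _) pG0)).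
by exists G; rewrite (permPl pG) perm_cat2l.
Qed.

Lemma anchor_disjoint_nth F : anchor_disjoint F ->
  forall i j, i < size F -> j < size F -> i != j -> forall W0,
  [disjoint anchors (nth W0 F i) & anchors (nth W0 F j)].
Proof.
elim: F => [|W F IHF] //= /andP[dW dF] [|i] [|j] //= ltiF ltjF neij W0.
- apply: disjointWr dW; apply/subsetP => x xF.
  by apply/flatten_mapP; exists (nth W0 F j); rewrite ?mem_nth.
- rewrite disjoint_sym; apply: disjointWr dW; apply/subsetP => x xF.
  by apply/flatten_mapP; exists (nth W0 F i); rewrite ?mem_nth.
- exact: IHF.
Qed.

Lemma count_family_edges F e : uniq (family_edges F) ->
  count (fun W => e \in wedges W) F = count_mem e (family_edges F).
Proof.
elim: F => [|W F IHF] //; rewrite family_edges_cons count_cat /=.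
by rewrite cat_uniq => /and3P[uW _ uF]; rewrite IHF // (count_uniq_mem e uW).
Qed.

Lemma euler_family_trails F : all trail F -> anchor_disjoint F ->
  uniq (family_edges F) -> (forall e, e \in family_edges F) ->
  euler_family inc F.
Proof.
move=> HF dF Hu Hcov; split => //; last exact: anchor_disjoint_nth.
by move=> e; rewrite count_family_edges // count_uniq_mem // Hcov.
Qed.

Definition trail_partition (F : seq walk) (S : {set E}) :=
  [/\ all trail F, uniq (family_edges F) & family_edges F =i S].

Lemma trail_partition_add F F' S x : trail_partition F S -> x \notin S ->
  all trail F' -> perm_eq (family_edges F') (x :: family_edges F) ->
  trail_partition F' (x |: S).
Proof.
case=> _ uF eF xS HF' pF'; split => //.
  by rewrite (perm_uniq pF') /= eF xS.
by move=> e; rewrite (perm_mem pF') !inE eF.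
Qed.

End ClosedTrails.

Section D3Trails.
Variables (V E : finType) (inc : E -> {set V}).
Notation trail := (closed_strict_trail inc).

Lemma D3_arc_neq x p : D3_arc inc x p -> x != p.
Proof.
by case/andP=> /eqP H1 _; apply/eqP => xp; move: H1; rewrite xp setDv cards0.
Qed.

Lemma D3_arc_trail x p : D3_arc inc x p ->
  exists2 W, trail W & wedges W = [:: x; p].
Proof.
move=> Dxp; have xp := D3_arc_neq Dxp; case/andP: Dxp => _ H3.
have [b bxp] : exists b, b \in inc x :&: inc p.
  by apply/card_gt0P; rewrite (leq_trans _ H3).
have [c [cxp cb _]] := card_gt2_avoid2 b b H3.
move: bxp cxp; rewrite !inE => /andP[bx bp] /andP[cx cp].
exists (b, [:: (x, c); (p, b)]) => //.
by apply/closed_strict_trailP; rewrite /= bx cx cp bp cb eq_sym cb inE xp.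
Qed.

Lemma D3_arc_trail_insert W x p : trail W -> p \in wedges W ->
  x \notin wedges W -> D3_arc inc x p ->
  exists2 W', trail W' & perm_eq (wedges W') (x :: wedges W).
Proof.
case: W => w0 s + /mapP[[p' w] pws /= Ep]; subst p'.
have [s1 [s2 ->]] : exists s1 s2, s = s1 ++ (p, w) :: s2.
  by move: pws => /= /splitPr[s1 s2]; exists s1, s2.
move=> /closed_strict_trailP /= [Hwalk _ Hlast Huniq] xW /andP[/eqP Hpx H3].
move: Hwalk; rewrite is_walk_from_cat /= => /andP[Hw1 /and4P[uw up wp Hw2]].
set u := last w0 (map snd s1) in uw up wp.
have [z [zxp zu zw]] := card_gt2_avoid2 u w H3.
move: zxp; rewrite inE => /andP[zx zp].
have insert2 a b : perm_eq [:: a; b] [:: x; p] ->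
    [&& u \in inc a, z \in inc a, z \in inc b & w \in inc b] ->
    exists2 W', trail W' &
      perm_eq (wedges W') (x :: wedges (w0, s1 ++ (p, w) :: s2)).
  move=> pab /and4P[ua za zb wb].
  have pW : perm_eq (wedges (w0, s1 ++ (a, z) :: (b, w) :: s2))
                    (x :: wedges (w0, s1 ++ (p, w) :: s2)).
    rewrite /wedges /= !map_cat /= (perm_catl _ (perm_cat pab (perm_refl _))) /=.
    by rewrite -[x :: _]cat1s perm_catCA.
  exists (w0, s1 ++ (a, z) :: (b, w) :: s2) => //.
  apply/closed_strict_trailP; split => /=.
  - by rewrite is_walk_from_cat Hw1 /= eq_sym zu zw ua za zb wb Hw2.
  - by rewrite size_cat /= !addnS.
  - by move: Hlast; rewrite !map_cat !last_cat.
  - by rewrite (perm_uniq pW) /= xW.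
have [ux | uNx] := boolP (u \in inc x).
  by apply: (insert2 x p); rewrite ?ux ?zx ?zp ?wp.
apply: (insert2 p x); first by rewrite perm_sym (perm_catC [:: x]).
rewrite up zp zx /=; apply: contraT => wNx.
have : [set u; w] \subset inc p :\: inc x.
  apply/subsetP => q; rewrite !inE => /orP[] /eqP ->.
    by rewrite uNx up.
  by rewrite wNx wp.
by move/subset_leq_card; rewrite cards2 uw Hpx.
Qed.

Lemma trail_partition_seed F S x p : trail_partition inc F S ->
  x \notin S -> p \notin S -> D3_arc inc x p ->
  exists F', trail_partition inc F' ([set x; p] :|: S).
Proof.
case=> HF uF eF xS pS Dxp; have [W HW eW] := D3_arc_trail Dxp.
exists (W :: F); split; first by rewrite /= HW.
  by rewrite family_edges_cons eW /= !inE !eF (negbTE xS) pS uF orbF D3_arc_neq.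
by move=> e; rewrite family_edges_cons eW !inE eF orbA.
Qed.

Lemma trail_partition_insert F S x p : trail_partition inc F S ->
  x \notin S -> p \in S -> D3_arc inc x p ->
  exists F', trail_partition inc F' (x |: S).
Proof.
move=> FS xS pS Dxp; have [HF _ eF] := FS.
have /flatten_mapP[W WF pW] : p \in family_edges F by rewrite eF.
have xW : x \notin wedges W.
  by apply: contra xS => xW; rewrite -eF; apply/flatten_mapP; exists W.
have [W' HW' pW'] := D3_arc_trail_insert (allP HF W WF) pW xW Dxp.
exists (W' :: rem W F); apply: (trail_partition_add FS xS).
  by rewrite /= HW'; apply/allP => Y /mem_rem; apply/allP.
rewrite family_edges_cons (perm_catr _ pW') /= perm_cons perm_sym.
exact: perm_flatten (perm_map _ (perm_to_rem WF)).
Qed.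

End D3Trails.

Section ArborescenceForest.
Variables (E : finType) (A : rel E) (P : {set {set E}}).
Hypothesis Ppart : partition P [set: E].
Hypothesis Parb : forall B, B \in P -> 2 <= #|B| /\ is_arborescence A B.

Definition block_arc (B : {set E}) : rel E :=
  fun u v => [&& A u v, u \in B & v \in B].

Definition block_rooted (B S : {set E}) :=
  exists2 r, r \in B :&: S & forall x, x \in B -> connect (block_arc B) x r.

Definition blockwise_rooted (S : {set E}) :=
  forall B, B \in P -> [disjoint B & S] \/ block_rooted B S.

Lemma blockwise_rooted0 : blockwise_rooted set0.
Proof. by move=> B _; left; rewrite -setI_eq0 setI0. Qed.

Lemma blockwise_rooted_extend (S T B : {set E}) :
  blockwise_rooted S -> B \in P -> T \subset B ->
  block_rooted B (T :|: S) -> blockwise_rooted (T :|: S).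
Proof.
move=> rootS BP TB rootB B' B'P; have [-> | B'B] := eqVneq B' B; first by right.
have dB'T : [disjoint B' & T].
  apply: disjointWr TB _.
  by case/and3P: Ppart => _ /trivIsetP/(_ B' B B'P BP B'B).
case: (rootS B' B'P) => [dB'S | [r rB'S r_root]].
  by left; rewrite disjoints_subset setCU subsetI -!disjoints_subset dB'T dB'S.
by right; exists r => //; move: rB'S; rewrite !inE => /andP[-> ->]; rewrite orbT.
Qed.

Lemma blockwise_rooted_grow S x : blockwise_rooted S -> x \notin S ->
  exists u v, [/\ A u v, u \notin S &
    (v \in S /\ blockwise_rooted (u |: S)) \/
    (v \notin S /\ blockwise_rooted ([set u; v] :|: S))].
Proof.
move=> rootS xS; have [/eqP coverP _ _] := and3P Ppart.
have xP : x \in cover P by rewrite coverP inE.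
set B := pblock P x; have BP : B \in P := pblock_mem xP.
have xB : x \in B by rewrite mem_pblock.
case: (rootS B BP) => [dBS | [r rBS r_root]].
- have [B2 [r rB [_ _ r_root]]] := Parb BP.
  have /card_gt0P[y] : 0 < #|B :\ r| by move: B2; rewrite (cardsD1 r B) rB.
  rewrite !inE => /andP[yr yB].
  have [u [v [/and3P[Auv uB vB] ur /eqP vr]]] :=
    connect_crossing (S := pred1 r) (r_root y yB) yr (eqxx r).
  subst v; exists u, r; split; rewrite ?(disjointFr dBS uB) //; right.
  split; first by rewrite (disjointFr dBS rB).
  apply: (blockwise_rooted_extend rootS BP).
    by apply/subsetP => z; rewrite !inE => /orP[] /eqP ->.
  by exists r => //; rewrite !inE rB eqxx !orbT.
- have rS : r \in S by case/setIP: rBS.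
  have [u [v [/and3P[Auv uB vB] uS vS]]] :=
    connect_crossing (S := mem S) (r_root x xB) xS rS.
  exists u, v; split => //; left; split => //.
  apply: (blockwise_rooted_extend rootS BP); first by rewrite sub1set.
  by exists r => //; move: rBS; rewrite !inE => /andP[-> ->]; rewrite orbT.
Qed.

End ArborescenceForest.

Lemma trail_partition_forest (V E : finType) (inc : E -> {set V})
    (A : rel E) (P : {set {set E}}) :
  (forall x y, A x y -> D3_arc inc x y) -> partition P [set: E] ->
  (forall B, B \in P -> 2 <= #|B| /\ is_arborescence A B) ->
  exists F, trail_partition inc F [set: E].
Proof.
move=> AD3 Ppart Parb.
suff grow S : blockwise_rooted A P S -> (exists F, trail_partition inc F S) ->
    exists F, trail_partition inc F [set: E].
  apply: (grow set0); first exact: blockwise_rooted0.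
  by exists [::]; split=> // e; rewrite inE.
have [n] := ubnP #|~: S|; elim: n S => // n IHn S ltSn rootS [F FS].
have [x xS | Scov] := pickP (fun x => x \notin S); last first.
  have -> : [set: E] = S by apply/setP => e; rewrite inE -[e \in S]negbK Scov.
  by exists F.
have [u [v [Auv uS [[vS rootuS] | [vS rootuvS]]]]] :=
  blockwise_rooted_grow Ppart Parb rootS xS.
- have [F' F'S] := trail_partition_insert FS uS vS (AD3 _ _ Auv).
  apply: (IHn _ _ rootuS); last by exists F'.
  exact: leq_trans (card_setCU_ltn (set11 u) uS) ltSn.
- have [F' F'S] := trail_partition_seed FS uS vS (AD3 _ _ Auv).
  apply: (IHn _ _ rootuvS); last by exists F'.
  exact: leq_trans (card_setCU_ltn (set21 u v) uS) ltSn.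
Qed.

Theorem theorem2p9 (V E : finType) (inc : E -> {set V})
  (HV : 0 < #|V|) (Hne : forall e : E, inc e != set0) :
  has_spanning_arborescence_forest (D3_arc inc) ->
  quasi_eulerian inc.
Proof.
case=> [A [P [AD3 Ppart Parb _]]].
have [F [HF uF eF]] := trail_partition_forest AD3 Ppart Parb.
have [G [HG dG pG]] := anchor_disjoint_trails HF uF.
exists G; apply: euler_family_trails => //; first by rewrite (perm_uniq pG).
by move=> e; rewrite (perm_mem pG) eF inE.
Qed.
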